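(* Let $\mathbb{K}$ be a field, $S=\mathbb{K}[x_1,\ldots,x_{2m}]$, and let $H$ be a simple graph on $\{x_1,\ldots,x_m\}$. Let $I\subseteq S$ be a support-$2$ monomial ideal such that $G(I)$ is the whiskered graph $W_H$, i.e. $E(G(I))=E(H)\cup\{\{x_1,x_{m+1}\},\ldots,\{x_m,x_{2m}\}\}$. Assume that $I$ has no embedded associated primes, $G(I)$ is triangle-free, and $\alpha_{i,j}\le 1$ for all $1\le i,j\le 2m$. Then the following are equivalent: (1) $I^{(2)}=I^2$; (2) for each edge $\{x_i,x_j\}\in E(H)$, either ($w_{i,m+i}=w_{i,j}$ and $w_{j,m+j}=w_{j,i}$) or ($w_{i,m+i}\ge 2w_{i,j}$ and $w_{j,m+j}\ge 2w_{j,i}$).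
   Context: For a monomial ideal $I$, $\mathcal{G}(I)$ denotes its minimal set of monomial generators. $I$ is a support-$2$ monomial ideal if every element of $\mathcal{G}(I)$ has the form $x_i^ax_j^b$ with $i<j$ and $a,b\ge 1$. The underlying simple graph $G(I)$ has an edge $\{x_i,x_j\}$ whenever some element of $\mathcal{G}(I)$ has support $\{x_i,x_j\}$. $\alpha_{i,j}$ is the number of elements of $\mathcal{G}(I)$ with support exactly $\{x_i,x_j\}$ (so here each edge has exactly one such generator). For an edge $\{x_i,x_j\}$ of $G(I)$, $w_{i,j}$ denotes the exponent of $x_i$ in the unique element of $\mathcal{G}(I)$ with support $\{x_i,x_j\}$ (so that generator is $x_i^{w_{i,j}}x_j^{w_{j,i}}$). Symbolic power: $I^{(2)}=\bigcap_{P\in\mathrm{MinAss}(I)}(I^2S_P\cap S)$ over the minimal primes of $I$. *)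

From mathcomp Require Import all_boot all_order all_algebra.
From mathcomp Require Import mpoly.
Set Implicit Arguments.
Unset Strict Implicit.
Unset Printing Implicit Defensive.
Import GRing.Theory.
Local Open Scope ring_scope.

Section Ideals.
Variable R : comNzRingType.

Definition is_ideal (I : R -> Prop) : Prop :=
  [/\ I 0, (forall x y, I x -> I y -> I (x + y)) & (forall r x, I x -> I (r * x))].

Definition ideal_eq (I J : R -> Prop) : Prop := forall f, I f <-> J f.

Definition ideal_sub (I J : R -> Prop) : Prop := forall f, I f -> J f.

Definition ideal_gen (A : R -> Prop) : R -> Prop :=
  fun f => forall J, is_ideal J -> (forall a, A a -> J a) -> J f.

Definition ideal_mul (I J : R -> Prop) : R -> Prop :=
  ideal_gen (fun f => exists a b, [/\ I a, J b & f = a * b]).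

Definition is_prime_ideal (P : R -> Prop) : Prop :=
  [/\ is_ideal P, ~ P 1 & forall a b, P (a * b) -> P a \/ P b].

Definition is_ass_prime (I P : R -> Prop) : Prop :=
  is_prime_ideal P /\ exists f : R, forall g, P g <-> I (g * f).

Definition is_embedded_prime (I P : R -> Prop) : Prop :=
  is_ass_prime I P /\
  exists Q, [/\ is_ass_prime I Q, ideal_sub Q P & ~ ideal_sub P Q].

Definition no_embedded_primes (I : R -> Prop) : Prop :=
  forall P, ~ is_embedded_prime I P.

Definition is_min_prime (I P : R -> Prop) : Prop :=
  [/\ is_prime_ideal P, ideal_sub I P &
      forall Q, is_prime_ideal Q -> ideal_sub I Q -> ideal_sub Q P -> ideal_sub P Q].

(* the contraction J S_P ∩ S of the extension of J to the localization at P *)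
Definition loc_contr (J P : R -> Prop) : R -> Prop :=
  fun f => exists s, ~ P s /\ J (s * f).

Definition symb_sq (I : R -> Prop) : R -> Prop :=
  fun f => forall P, is_min_prime I P -> loc_contr (ideal_mul I I) P f.

End Ideals.

Section Monomial.
Variables (n : nat) (K : fieldType).
Implicit Types (I : {mpoly K[n]} -> Prop) (mm : 'X_{1..n}).

Definition is_monomial_ideal I : Prop :=
  is_ideal I /\
  ideal_eq I (ideal_gen (fun f => exists mm, f = 'X_[mm] /\ I f)).

(* mm is (the exponent of) an element of the minimal monomial generating set G(I):
   a monomial of I not properly divisible by any other monomial of I *)
Definition mingen I mm : Prop :=
  I 'X_[mm] /\ forall mm', I 'X_[mm'] -> lem mm' mm -> mm' = mm.

Definition msupp mm : {set 'I_n} := [set i | mm i != 0%N].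

Definition is_support2 I : Prop :=
  is_monomial_ideal I /\
  forall mm, mingen I mm -> exists u v : 'I_n, u != v /\ msupp mm = [set u; v].

Definition GI_edge I (u v : 'I_n) : Prop :=
  u != v /\ exists mm, mingen I mm /\ msupp mm = [set u; v].

Definition alpha_le1 I : Prop :=
  forall (u v : 'I_n) mm mm', mingen I mm -> mingen I mm' ->
    msupp mm = [set u; v] -> msupp mm' = [set u; v] -> mm = mm'.

Definition GI_triangle_free I : Prop :=
  forall u v w : 'I_n, ~ [/\ GI_edge I u v, GI_edge I v w & GI_edge I u w].

(* w_{u,v} = a and w_{v,u} = b : the generator with support {x_u, x_v}
   is x_u^a x_v^b *)
Definition w_is I (u v : 'I_n) (a b : nat) : Prop :=
  exists mm, [/\ mingen I mm, msupp mm = [set u; v], mm u = a & mm v = b].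

End Monomial.

(* H : simple graph on 'I_m (vertices x_1..x_m); variable x_i is lshift m i,
   its whisker x_{m+i} is rshift m i, in 'I_(m + m). *)
Definition is_simple_graph (m : nat) (H : rel 'I_m) : Prop :=
  ssrbool.symmetric H /\ ssrbool.irreflexive H.

Definition whisker_edge (m : nat) (H : rel 'I_m) (u v : 'I_(m + m)) : Prop :=
  (exists i j, [/\ u = lshift m i, v = lshift m j & H i j]) \/
  (exists i, (u = lshift m i /\ v = rshift m i) \/ (u = rshift m i /\ v = lshift m i)).

(* The minimal primes of I are generated by the minimal vertex covers of the whiskered
   graph: x_(m+i) for i in an independent set A of H and x_i for i outside A.  Localizing a
   monomial ideal at such a prime only forgets the variables outside the cover, so a monomial
   lies in I^(2) exactly when, for every cover, it dominates on the cover the product of two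
   minimal generators.  If the edge condition fails at an edge, an explicit monomial supported
   on that edge and a whisker passes this test but is not in I^2.  Conversely, a monomial with
   bounded exponents that is maximal outside I^2 fails the test for the cover read off from its
   saturated coordinates: at a vertex where both x_i and x_(m+i) could still be raised, the two
   witnesses of the raised monomials in I^2 recombine, using the edge condition and
   triangle-freeness, into a witness for the monomial itself. *)

From Pilot Require Import Defs.
From mathcomp Require Import all_boot all_order all_algebra.
From mathcomp Require Import mpoly.
From mathcomp Require Import zify ring.
From Stdlib Require Import Classical ClassicalEpsilon.

Set Implicit Arguments.
Unset Strict Implicit.
Unset Printing Implicit Defensive.
Import GRing.Theory.

Definition asbool (P : Prop) : bool :=
  if excluded_middle_informative P then true else false.

Lemma asboolP (P : Prop) : reflect P (asbool P).
Proof. by rewrite /asbool; case: excluded_middle_informative => ?; constructor. Qed.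

Section Ideals.
Variable R : comNzRingType.
Implicit Types (A I J P : R -> Prop).
Local Open Scope ring_scope.

Lemma ideal_gen_is_ideal A : is_ideal (ideal_gen A).
Proof.
split=> [J [] // | x y Ax Ay J JI JA | r x Ax J JI JA]; case: (JI) => _ JD JM.
- exact: JD (Ax J JI JA) (Ay J JI JA).
- exact: JM (Ax J JI JA).
Qed.

Lemma mem_ideal_gen A a : A a -> ideal_gen A a.
Proof. by move=> Aa J _; apply. Qed.

Lemma ideal_mul_is_ideal I J : is_ideal (ideal_mul I J).
Proof. exact: ideal_gen_is_ideal. Qed.

Lemma mem_ideal_mul I J a b : I a -> J b -> ideal_mul I J (a * b).
Proof. by move=> Ia Jb; apply: mem_ideal_gen; exists a, b. Qed.

Lemma ideal_mulr I r x : is_ideal I -> I x -> I (x * r).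
Proof. by move=> [_ _ IM] Ix; rewrite mulrC; apply: IM. Qed.

Lemma ideal_sum I (T : Type) (r : seq T) (Q : pred T) (F : T -> R) :
  is_ideal I -> (forall x, Q x -> I (F x)) -> I (\sum_(x <- r | Q x) F x).
Proof.
move=> [I0 ID _] IF; elim: r => [|x r IHr]; first by rewrite big_nil.
by rewrite big_cons; case: ifP => // Qx; apply: ID (IF _ Qx) IHr.
Qed.

Lemma prime_ideal_expr P x k : is_prime_ideal P -> P (x ^+ k) -> P x.
Proof.
move=> [_ P1 Pmul]; elim: k => [|k IHk]; first by rewrite expr0.
by rewrite exprS => /Pmul [|/IHk].
Qed.

Lemma prime_ideal_prod P (T : Type) (r : seq T) (F : T -> R) :
  is_prime_ideal P -> P (\prod_(x <- r) F x) -> exists x, P (F x).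
Proof.
move=> [_ P1 Pmul]; elim: r => [|x r IHr]; first by rewrite big_nil.
by rewrite big_cons => /Pmul [Px | /IHr //]; exists x.
Qed.

End Ideals.

Section MonomialIdeals.
Variables (n : nat) (K : fieldType).
Local Notation poly := {mpoly K[n]}.
Implicit Types (M : 'X_{1..n} -> Prop) (I J : poly -> Prop) (u w : 'X_{1..n}).
Local Open Scope ring_scope.

Definition msupp_in M (f : poly) : Prop := forall u, u \in msupp f -> M u.

Definition upward_closed M : Prop := forall u w, M u -> M (u + w)%MM.

Lemma msupp_in_ideal M : upward_closed M -> is_ideal (msupp_in M).
Proof.
move=> Mup; split.
- by move=> u; rewrite mcoeff_msupp mcoeff0 eqxx.
- by move=> f g Mf Mg u /msuppD_le; rewrite mem_cat => /orP[/Mf | /Mg].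
- move=> r f Mf u /msuppM_le /allpairsP [[t v] /= [_ fv ->]].
  by rewrite addmC; apply/Mup/Mf.
Qed.

Lemma msupp_in_X M u : M u -> msupp_in M 'X_[u].
Proof. by move=> Mu v; rewrite msuppX inE => /eqP ->. Qed.

Lemma msupp_in_sub M J :
  is_ideal J -> (forall u, M u -> J 'X_[u]) -> ideal_sub (msupp_in M) J.
Proof.
move=> JI JM f Mf; rewrite (mpolyE f) big_seq; apply: ideal_sum => // u fu.
by case: JI => _ _ JZ; rewrite -mul_mpolyC; apply/JZ/JM/Mf.
Qed.

Lemma ideal_monomials_upward I : is_ideal I -> upward_closed (fun u => I 'X_[u]).
Proof. by move=> II u w Iu; rewrite mpolyXD; apply: ideal_mulr. Qed.

Lemma monomial_idealE I :
  is_monomial_ideal I -> ideal_eq I (msupp_in (fun u => I 'X_[u])).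
Proof.
move=> [II Igen] f; split; last exact: msupp_in_sub.
move=> /Igen; apply; first exact: msupp_in_ideal (ideal_monomials_upward II).
by move=> _ [u [-> Iu]]; apply: msupp_in_X.
Qed.

Lemma lem_mdeg_ltn u w : (u <= w)%MM -> u != w -> (mdeg u < mdeg w)%N.
Proof.
move=> le_uw ne_uw; rewrite -(submK le_uw) mdegD -{1}[mdeg u]add0n ltn_add2r.
by rewrite lt0n mdeg_eq0; apply: contra ne_uw => /eqP wu0; rewrite -(submK le_uw) wu0 add0m.
Qed.

Lemma mingen_below I u : I 'X_[u] -> exists2 mm, mingen I mm & (mm <= u)%MM.
Proof.
have [d] := ubnP (mdeg u); elim: d u => // d IHd u /ltnSE le_ud Iu.
case: (classic (mingen I u)) => [u_min | u_not_min].
  by exists u; rewrite ?lepm_refl.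
have [u' [Iu' le_u'u ne_u'u]] : exists u', [/\ I 'X_[u'], (u' <= u)%MM & u' != u].
  apply: NNPP => none; apply: u_not_min; split=> // u' Iu' le_u'u.
  by apply/eqP/negPn/negP => ne; apply: none; exists u'.
have [mm mm_min le_mmu'] := IHd u' (leq_trans (lem_mdeg_ltn le_u'u ne_u'u) le_ud) Iu'.
by exists mm => //; apply: lepm_trans le_mmu' le_u'u.
Qed.

Definition pair_below (gen : 'X_{1..n} -> Prop) (C : pred 'I_n) u : Prop :=
  exists p q, [/\ gen p, gen q & forall v, C v -> (p v + q v <= u v)%N].

Lemma pair_below_upward gen C : upward_closed (pair_below gen C).
Proof.
move=> u w [p [q [gp gq le_pq]]]; exists p, q; split=> // v Cv.
by rewrite mnmDE (leq_trans (le_pq v Cv)) ?leq_addr.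
Qed.

Lemma ideal_sqE I :
  is_monomial_ideal I -> ideal_eq (ideal_mul I I) (msupp_in (pair_below (mingen I) predT)).
Proof.
move=> Imon f; have [II _] := Imon; split.
- apply; first exact: msupp_in_ideal (@pair_below_upward _ _).
  move=> _ [a [b [Ia Ib ->]]] u /msuppM_le /allpairsP [[t v] /= [a_t b_v ->]].
  have [p p_min /mnm_lepP le_pt] := mingen_below ((monomial_idealE Imon a).1 Ia t a_t).
  have [q q_min /mnm_lepP le_qv] := mingen_below ((monomial_idealE Imon b).1 Ib v b_v).
  by exists p, q; split=> // x _; rewrite mnmDE leq_add.
- apply: msupp_in_sub; first exact: ideal_mul_is_ideal.
  move=> u [p [q [[Ip _] [Iq _] /(_ _ isT) le_pq]]].
  have /submK <- : (p + q <= u)%MM by apply/mnm_lepP => v; rewrite mnmDE.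
  rewrite addmC !mpolyXD; apply: (ideal_mulr _ (ideal_mul_is_ideal I I)).
  exact: mem_ideal_mul.
Qed.

End MonomialIdeals.

Section VariableIdeals.
Variables (n : nat) (K : fieldType).
Local Notation poly := {mpoly K[n]}.
Implicit Types (I P Q : poly -> Prop) (t u w : 'X_{1..n}).
Local Open Scope ring_scope.

Definition mfilter (keep : pred 'X_{1..n}) (p : poly) : poly :=
  \sum_(u <- msupp p | keep u) p@_u *: 'X_[u].

Lemma mcoeff_mfilter keep p u : (mfilter keep p)@_u = if keep u then p@_u else 0.
Proof.
rewrite /mfilter raddf_sum /= big_mkcond /=.
under eq_bigr do rewrite mcoeffZ mcoeffX.
case: (boolP (u \in msupp p)) => p_u.
  rewrite (bigD1_seq u) ?msupp_uniq //= eqxx mulr1 big1 ?addr0 // => w /negbTE ne_wu.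
  by rewrite ne_wu mulr0 if_same.
rewrite (memN_msupp_eq0 p_u) if_same big1_seq // => w /andP [_ p_w].
by case: eqP => [wu | _]; [move: p_u; rewrite -wu p_w | rewrite mulr0 if_same].
Qed.

Lemma msupp_mfilter keep p u : (u \in msupp (mfilter keep p)) = keep u && (u \in msupp p).
Proof. by rewrite !mcoeff_msupp mcoeff_mfilter; case: (keep u); rewrite ?eqxx. Qed.

Lemma mfilter_neq0 (keep : pred 'X_{1..n}) (p : poly) u :
  keep u -> u \in msupp p -> mfilter keep p != 0.
Proof.
move=> keep_u p_u; apply/eqP => p0.
by move: (msupp_mfilter keep p u); rewrite p0 msupp0 in_nil keep_u p_u.
Qed.

Lemma mcoeffM_eq0 (a b : poly) w :
  (forall t u, t \in msupp a -> u \in msupp b -> w = (t + u)%MM -> False) -> (a * b)@_w = 0.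
Proof.
move=> no_split; apply: memN_msupp_eq0; apply/negP.
by move=> /msuppM_le /allpairsP [[t u] /= [a_t b_u]]; apply: no_split.
Qed.

Lemma prime_X_var P u : is_prime_ideal P -> P 'X_[u] -> exists2 v, (0 < u v)%N & P 'X_v.
Proof.
move=> Pprime; rewrite mpolyXE_id => /(prime_ideal_prod Pprime) [v Pv].
case: (posnP (u v)) => [u_v0 | u_v_gt0]; last by exists v; last exact: prime_ideal_expr Pv.
by case: Pprime => _ P1 _; move: Pv; rewrite u_v0 expr0.
Qed.

Variable C : pred 'I_n.

Definition deg_on u : nat := \sum_(i | C i) u i.

Lemma deg_onD u w : deg_on (u + w)%MM = (deg_on u + deg_on w)%N.
Proof. by rewrite /deg_on -big_split; apply: eq_bigr => i _; rewrite mnmDE. Qed.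

Lemma deg_on_eq0 u : deg_on u = 0%N -> forall v, C v -> u v = 0%N.
Proof. by move/eqP; rewrite sum_nat_eq0 => /forall_inP u0 v /u0 /eqP. Qed.

Lemma deg_on_gt0 u v : C v -> (0 < u v)%N -> (0 < deg_on u)%N.
Proof. by move=> Cv u_v; rewrite /deg_on (bigD1 v) //= ltn_addr. Qed.

Definition var_ideal : poly -> Prop := msupp_in (fun u => deg_on u != 0%N).

Lemma not_var_ideal s : ~ var_ideal s -> exists2 t, t \in msupp s & deg_on t = 0%N.
Proof.
move=> s_out; apply: NNPP => none; apply: s_out => t s_t.
by apply/eqP => t0; apply: none; exists t.
Qed.

Lemma var_ideal_X v : var_ideal 'X_v -> C v.
Proof.
move=> /(_ U_(v)%MM); rewrite msuppX inE eqxx => /(_ isT).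
apply: contraR => Cv; apply/eqP; rewrite /deg_on big1 // => i Ci.
by rewrite mnm1E; case: eqP => // vi; move: Cv; rewrite vi Ci.
Qed.

Lemma var_ideal_min P : is_ideal P -> (forall v, C v -> P 'X_v) -> ideal_sub var_ideal P.
Proof.
move=> PI PC; apply: msupp_in_sub => // u; rewrite -lt0n => u_gt0.
have [v Cv u_v] : exists2 v, C v & (0 < u v)%N.
  apply: NNPP => none; move: u_gt0; rewrite /deg_on big1 // => v Cv.
  by apply/eqP; rewrite -leqn0 leqNgt; apply/negP => u_v; apply: none; exists v.
have le_vu : (U_(v) <= u)%MM by rewrite lep1mP -lt0n.
by rewrite -(submK le_vu) addmC mpolyXD; exact: ideal_mulr (PC _ Cv).
Qed.

Section Localization.
Variables (good : 'X_{1..n} -> Prop) (s f : poly).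
Hypothesis good_up : upward_closed good.
Hypothesis good_cancel : forall t u, deg_on t = 0%N -> good (t + u)%MM -> good u.
Hypothesis s_out : ~ var_ideal s.

(* Among the bad monomials of f take those of least C-degree k, and the monomials of s of
   C-degree 0; the product of the leading terms of these two parts survives in s * f. *)
Lemma msupp_in_mulKl : msupp_in good (s * f) -> msupp_in good f.
Proof.
move=> good_sf; apply: NNPP => f_bad.
have [u0 f_u0 bad_u0] : exists2 u0, u0 \in msupp f & ~ good u0.
  apply: NNPP => none; apply: f_bad => u f_u.
  by apply: NNPP => bad_u; apply: none; exists u.
pose bad u := ~~ asbool (good u).
have bad_ex : exists k, has (fun u => bad u && (deg_on u == k)) (msupp f).
  by exists (deg_on u0); apply/hasP; exists u0; rewrite // eqxx andbT; apply/asboolP.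
case: (ex_minnP bad_ex) => k /hasP [u1 f_u1 bad_u1] k_min.
pose f0 := mfilter (fun u => bad u && (deg_on u == k)) f.
pose s0 := mfilter (fun t => deg_on t == 0%N) s.
have [t1 s_t1 t1_0] := not_var_ideal s_out.
have f0_nz : f0 != 0 := mfilter_neq0 bad_u1 f_u1.
have s0_nz : s0 != 0 by apply: mfilter_neq0 s_t1; rewrite /= t1_0.
set w := (mlead s0 + mlead f0)%MM.
move: (mlead_supp s0_nz) (mlead_supp f0_nz).
rewrite !msupp_mfilter => /andP [/eqP s0_deg _] /andP [/andP [bad_f0 /eqP f0_deg] _].
have w_deg : deg_on w = k by rewrite deg_onD s0_deg f0_deg.
have bad_w : ~ good w by move=> /(good_cancel s0_deg) /asboolP; apply/negP.
have low_s : ((s - s0) * f0)@_w = 0.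
  apply: mcoeffM_eq0 => t u s_t f0_u w_tu.
  move: f0_u; rewrite msupp_mfilter => /andP [/andP [_ /eqP u_deg] _].
  have t_deg : deg_on t = 0%N by move: w_deg; rewrite w_tu deg_onD u_deg; lia.
  by move: s_t; rewrite mcoeff_msupp mcoeffB mcoeff_mfilter t_deg eqxx subrr eqxx.
have high_f : (s * (f - f0))@_w = 0.
  apply: mcoeffM_eq0 => t u s_t f_u w_tu.
  move: f_u; rewrite mcoeff_msupp mcoeffB mcoeff_mfilter.
  case: ifP => [_ | /negbT not_f0_u]; first by rewrite subrr eqxx.
  rewrite subr0 -mcoeff_msupp => f_u.
  have bad_u : bad u.
    by apply/negP => /asboolP good_u; apply: bad_w; rewrite w_tu addmC; apply: good_up.
  have : (k <= deg_on u)%N by apply: k_min; apply/hasP; exists u; rewrite ?bad_u ?eqxx.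
  by move: not_f0_u w_deg; rewrite bad_u w_tu deg_onD => /eqP; lia.
apply: bad_w; apply: good_sf; rewrite mcoeff_msupp.
have -> : s * f = s0 * f0 + ((s - s0) * f0 + s * (f - f0)) by ring.
by rewrite !mcoeffD low_s high_f !addr0 mleadcM mulf_neq0 // mleadc_eq0.
Qed.

End Localization.

Lemma deg_on_neq0_upward : upward_closed (fun u => deg_on u != 0%N).
Proof. by move=> u w; rewrite deg_onD -!lt0n => /leq_trans; apply; apply: leq_addr. Qed.

Lemma var_ideal_prime : is_prime_ideal var_ideal.
Proof.
split; first exact: msupp_in_ideal deg_on_neq0_upward.
- move=> /(_ 0%MM); rewrite mcoeff_msupp mcoeff1 eqxx oner_neq0 => /(_ isT).
  by rewrite /deg_on big1 // => i _; rewrite mnm0E.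
- move=> a b ab_in; case: (classic (var_ideal a)) => [|a_out]; [by left | right].
  apply: (msupp_in_mulKl deg_on_neq0_upward _ a_out ab_in).
  by move=> t u t0; rewrite deg_onD t0.
Qed.

Lemma loc_contr_sq_var_ideal I f : is_monomial_ideal I ->
  loc_contr (ideal_mul I I) var_ideal f -> msupp_in (pair_below (mingen I) C) f.
Proof.
move=> Imon [s [s_out sf_sq]]; apply: (msupp_in_mulKl (@pair_below_upward _ _ _) _ s_out).
  move=> t u /deg_on_eq0 t0 [p [q [gp gq le_pq]]]; exists p, q; split=> // v Cv.
  by move: (le_pq v Cv); rewrite mnmDE t0.
move=> w /((ideal_sqE Imon _).1 sf_sq) [p [q [gp gq le_pq]]].
by exists p, q; split=> // v _; apply: le_pq.
Qed.

Lemma loc_contr_sq_X I P p q u : is_ideal I -> is_prime_ideal P -> mingen I p -> mingen I q ->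
  (forall v, P 'X_v -> (p v + q v <= u v)%N) -> loc_contr (ideal_mul I I) P 'X_[u].
Proof.
move=> II Pprime [Ip _] [Iq _] le_pq.
pose w : 'X_{1..n} := [multinom (if asbool (P 'X_v) then 0 else p v + q v)%N | v < n].
exists 'X_[w]; split.
  by move=> /(prime_X_var Pprime) [v]; rewrite mnmE; case: asboolP => // notP _ /notP.
have le_pq_wu : (p + q <= w + u)%MM.
  apply/mnm_lepP => v; rewrite !mnmDE mnmE.
  by case: asboolP => [/le_pq // | _]; apply: leq_addr.
rewrite -mpolyXD -(submK le_pq_wu) addmC !mpolyXD.
by apply: (ideal_mulr _ (ideal_mul_is_ideal I I)); apply: mem_ideal_mul.
Qed.

Lemma symb_sq_X I u : is_ideal I ->
  (forall P, is_min_prime I P -> exists p q,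
     [/\ mingen I p, mingen I q & forall v, P 'X_v -> (p v + q v <= u v)%N]) ->
  symb_sq I 'X_[u].
Proof.
move=> II fits P Pmin; have [p [q [gp gq le_pq]]] := fits P Pmin.
by apply: loc_contr_sq_X gp gq le_pq => //; case: Pmin.
Qed.

Lemma prime_mingen_var I Q mm : is_prime_ideal Q -> ideal_sub I Q -> mingen I mm ->
  exists2 v, (0 < mm v)%N & Q 'X_v.
Proof. by move=> Qprime IQ [Imm _]; apply: prime_X_var Qprime (IQ _ Imm). Qed.

Lemma monomial_ideal_sub_var_ideal I : is_monomial_ideal I ->
  (forall mm, mingen I mm -> exists2 v, C v & (0 < mm v)%N) -> ideal_sub I var_ideal.
Proof.
move=> Imon Ccover f /(monomial_idealE Imon f) If u /If /mingen_below [mm].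
move=> /Ccover [v Cv mm_v] /mnm_lepP le_mmu; rewrite -lt0n.
exact: deg_on_gt0 Cv (leq_trans mm_v (le_mmu v)).
Qed.

Lemma var_ideal_min_prime I : is_monomial_ideal I ->
  (forall mm, mingen I mm -> exists2 v, C v & (0 < mm v)%N) ->
  (forall Q, is_prime_ideal Q -> ideal_sub I Q -> ideal_sub Q var_ideal ->
     forall v, C v -> Q 'X_v) ->
  is_min_prime I var_ideal.
Proof.
move=> Imon Ccover Cmin; split; first exact: var_ideal_prime.
  exact: monomial_ideal_sub_var_ideal.
by move=> Q Qprime IQ QC; apply: var_ideal_min; [case: Qprime | apply: Cmin].
Qed.

Lemma min_prime_vars_sub I P : is_monomial_ideal I -> is_min_prime I P ->
  (forall v, C v -> P 'X_v) -> (forall mm, mingen I mm -> exists2 v, C v & (0 < mm v)%N) ->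
  forall v, P 'X_v -> C v.
Proof.
move=> Imon [Pprime _ Pmin] CP Ccover v Pv; apply: var_ideal_X.
apply: (Pmin _ var_ideal_prime (monomial_ideal_sub_var_ideal Imon Ccover)) => //.
by apply: var_ideal_min => //; case: Pprime.
Qed.

End VariableIdeals.

Section PairBelow.
Variables (n : nat) (gen : 'X_{1..n} -> Prop).
Implicit Types (u w : 'X_{1..n}).
Local Notation sq := (pair_below gen predT).

Lemma pair_below_le C u w : (u <= w)%MM -> pair_below gen C u -> pair_below gen C w.
Proof. by move=> /submK <-; rewrite addmC; apply: pair_below_upward. Qed.

Lemma raise_tight u x : ~ sq u -> sq (u + U_(x))%MM ->
  exists p q, [/\ gen p, gen q, 0 < p x, p x + q x = (u x).+1
                & forall v, v != x -> p v + q v <= u v].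
Proof.
move=> u_out [p [q [gp gq /(_ _ isT) le_pq]]].
have le_off v : v != x -> p v + q v <= u v.
  by move=> ne_vx; move: (le_pq v); rewrite mnmDE mnm1E eq_sym (negbTE ne_vx) addn0.
have tight : p x + q x = (u x).+1.
  have := le_pq x; rewrite mnmDE mnm1E eqxx addn1 leq_eqVlt => /orP [/eqP // | lt_x].
  by case: u_out; exists p, q; split=> // v _; case: (eqVneq v x) => [-> | /le_off].
have [p_x | q_x] : 0 < p x \/ 0 < q x by lia.
  by exists p, q.
by exists q, p; split=> // [|v /le_off]; rewrite addnC.
Qed.

Definition defect (N : nat) u := \sum_v (N - u v).

Lemma defect_raise N u v : u v < N -> defect N (u + U_(v))%MM < defect N u.
Proof.
move=> lt_uv; rewrite /defect (bigD1 v) //= [X in _ < X](bigD1 v) //= mnmDE mnm1E eqxx.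
rewrite (eq_bigr (fun x => N - u x)); first by rewrite ltn_add2r; lia.
by move=> x ne_xv; rewrite mnmDE mnm1E eq_sym (negbTE ne_xv) addn0.
Qed.

Lemma exists_maximal_outside (Q : 'X_{1..n} -> Prop) N u :
  (forall v, u v <= N) -> ~ Q u ->
  exists w, [/\ (u <= w)%MM, forall v, w v <= N, ~ Q w
              & forall v, w v < N -> Q (w + U_(v))%MM].
Proof.
have [d] := ubnP (defect N u); elim: d u => // d IHd u /ltnSE def_u u_le u_out.
case: (classic (exists v, u v < N /\ ~ Q (u + U_(v))%MM)) => [[v [lt_uv Q_out]] | maximal].
  have [|v'|w [le_w w_le w_out w_max]] := IHd (u + U_(v))%MM _ _ Q_out.
  - exact: leq_trans (defect_raise lt_uv) def_u.
  - by rewrite mnmDE mnm1E; case: (eqVneq v v') => [<- | _]; rewrite ?addn1 ?addn0.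
  by exists w; split=> //; apply: lepm_trans le_w; apply: lem_addr.
exists u; split=> //; first exact: lepm_refl.
by move=> v lt_uv; apply: NNPP => Q_out; apply: maximal; exists v.
Qed.

End PairBelow.

Section SupportPairs.
Variable n : nat.
Implicit Types (mm : 'X_{1..n}) (x y w : 'I_n).

Lemma mnm_pair_neq0 mm x y w :
  Defs.msupp mm = [set x; y] -> (mm w != 0) = (w == x) || (w == y).
Proof. by move=> mmE; rewrite -in_set2 -mmE inE. Qed.

Lemma mnm_pair_eq0 mm x y w : Defs.msupp mm = [set x; y] -> w != x -> w != y -> mm w = 0.
Proof.
by move=> /mnm_pair_neq0 mmE ne_x ne_y; apply/eqP/negbNE; rewrite mmE negb_or ne_x.
Qed.

Lemma mnm_pair_gt0 mm x y : Defs.msupp mm = [set x; y] -> 0 < mm x /\ 0 < mm y.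
Proof. by move=> /mnm_pair_neq0 mmE; rewrite !lt0n !mmE !eqxx orbT. Qed.

Lemma w_is_mingen (K : fieldType) (I : {mpoly K[n]} -> Prop) x y a b mm :
  alpha_le1 I -> w_is I x y a b -> mingen I mm -> Defs.msupp mm = [set x; y] ->
  a = mm x /\ b = mm y.
Proof.
move=> alpha [mm' [mm'_min mm'E <- <-]] mm_min mmE.
by rewrite (alpha _ _ _ _ mm'_min mm_min mm'E mmE).
Qed.

Lemma mingen_w_is (K : fieldType) (I : {mpoly K[n]} -> Prop) x y mm :
  mingen I mm -> Defs.msupp mm = [set x; y] -> w_is I x y (mm x) (mm y).
Proof. by move=> mm_min mmE; exists mm. Qed.

End SupportPairs.

Definition symb_sq_cond (a b c d : nat) : Prop :=
  (c = a /\ d = b) \/ (2 * a <= c /\ 2 * b <= d).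

Lemma lshift_or_rshift m n (v : 'I_(m + n)) :
  (exists i, v = lshift n i) \/ (exists j, v = rshift m j).
Proof.
by case: (splitP v) => [i | j] vE; [left; exists i | right; exists j]; apply: val_inj.
Qed.

Definition independent m (H : rel 'I_m) (A : pred 'I_m) : Prop :=
  forall i j, A i -> A j -> ~~ H i j.

Definition whisker_cover m (A : pred 'I_m) : pred 'I_(m + m) :=
  fun v => match split v with inl i => ~~ A i | inr i => A i end.

Lemma whisker_cover_L m (A : pred 'I_m) i : whisker_cover A (lshift m i) = ~~ A i.
Proof. by rewrite /whisker_cover -[lshift m i]/(unsplit (inl i)) unsplitK. Qed.

Lemma whisker_cover_R m (A : pred 'I_m) i : whisker_cover A (rshift m i) = A i.
Proof. by rewrite /whisker_cover -[rshift m i]/(unsplit (inr i)) unsplitK. Qed.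

Section WhiskeredGraph.
Variables (m : nat) (H : rel 'I_m).
Hypothesis H_simple : is_simple_graph H.
Local Notation L i := (lshift m i).
Local Notation R i := (rshift m i).
Let shiftE :=
  (inj_eq (@lshift_inj m m), inj_eq (@rshift_inj m m), @eq_lrshift m m, @eq_rlshift m m).

Lemma H_sym : ssrbool.symmetric H. Proof. by case: H_simple. Qed.
Lemma H_irr : irreflexive H. Proof. by case: H_simple. Qed.

Lemma H_neq i j : H i j -> i != j.
Proof. by apply: contraTneq => ->; rewrite H_irr. Qed.

Section GeneratorCombinatorics.
Variable gen : 'X_{1..m + m} -> Prop.
Variables (h : 'I_m -> 'X_{1..m + m}) (g : 'I_m -> 'I_m -> 'X_{1..m + m}).
Implicit Types (u p q : 'X_{1..m + m}).
Local Notation sq := (pair_below gen predT).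

Hypothesis gen_g : forall i j, H i j -> gen (g i j).
Hypothesis g_sym : forall i j, H i j -> g i j = g j i.
Hypothesis genP : forall p, gen p -> (exists i, p = h i) \/ (exists i j, H i j /\ p = g i j).
Hypothesis h_supp : forall i v, v != L i -> v != R i -> h i v = 0.
Hypothesis h_R_gt0 : forall i, 0 < h i (R i).
Hypothesis g_supp : forall i j v, H i j -> v != L i -> v != L j -> g i j v = 0.
Hypothesis g_L_gt0 : forall i j, H i j -> 0 < g i j (L i).

Lemma h_L_eq0 i k : k != i -> h i (L k) = 0.
Proof. by move=> ne_ki; rewrite h_supp ?shiftE. Qed.

Lemma h_R_eq0 i k : k != i -> h i (R k) = 0.
Proof. by move=> ne_ki; rewrite h_supp ?shiftE. Qed.

Lemma g_R_eq0 i j k : H i j -> g i j (R k) = 0.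
Proof. by move=> ij; rewrite g_supp ?shiftE. Qed.

Lemma g_L_eq0 i j k : H i j -> k != i -> k != j -> g i j (L k) = 0.
Proof. by move=> ij ne_ki ne_kj; rewrite g_supp ?shiftE. Qed.

Lemma gen_R p i : gen p -> 0 < p (R i) -> p = h i.
Proof.
move=> /genP [[k ->] | [k [l [kl ->]]]]; last by rewrite g_R_eq0.
by case: (eqVneq i k) => [-> // | /h_R_eq0 ->].
Qed.

Lemma gen_L p i : gen p -> 0 < p (L i) -> p = h i \/ exists2 j, H i j & p = g i j.
Proof.
move=> /genP [[k ->] | [k [l [kl ->]]]] p_i.
  by left; case: (eqVneq i k) p_i => [-> // | /h_L_eq0 ->].
right; case: (eqVneq i k) => [-> | ne_ik]; first by exists l.
case: (eqVneq i l) => [-> | ne_il]; first by exists k; rewrite 1?H_sym // g_sym.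
by move: p_i; rewrite g_L_eq0.
Qed.

Lemma gen_two p j k : gen p -> 0 < p (L j) -> 0 < p (L k) -> j != k -> H j k.
Proof.
move=> gp p_j p_k ne_jk; case: (gen_L gp p_j) => [ph | [l jl pg]].
  by move: p_k; rewrite ph h_L_eq0 // eq_sym.
move: p_k; rewrite pg; case: (eqVneq k l) => [-> // | ne_kl].
by rewrite g_L_eq0 // eq_sym.
Qed.

Lemma gen_below_edge u i j p : H i j -> gen p -> (forall v, p v <= u v) ->
  (forall k, 0 < u (R k) -> k = j) -> (forall k, 0 < u (L k) -> k = i \/ k = j) ->
  p = h j \/ p = g i j.
Proof.
move=> ij gp; case: (genP gp) => [[k ->] | [k [l [kl ->]]]] le_pu uR uL.
  by left; rewrite (uR k) //; apply: leq_trans (h_R_gt0 k) (le_pu _).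
have g_l : 0 < g k l (L l) by rewrite g_sym // g_L_gt0 // H_sym.
have k_ij := uL k (leq_trans (g_L_gt0 kl) (le_pu _)).
have l_ij := uL l (leq_trans g_l (le_pu _)).
right; case: k_ij l_ij kl => -> [] -> kl; rewrite ?H_irr // in kl; exact: g_sym.
Qed.

Section SquareCondition.
Hypothesis H_triangle_free : forall i j k, H i j -> H i k -> H j k -> False.
Hypothesis cond : forall i j, H i j ->
  symb_sq_cond (g i j (L i)) (g i j (L j)) (h i (L i)) (h j (L j)).

Lemma g_le_h i j : H i j -> g i j (L i) <= h i (L i).
Proof. by move=> /cond [[-> _] | [le_ij _]]; lia. Qed.

Lemma gen_le_L p i : gen p -> p (L i) <= h i (L i).
Proof.
move=> gp; case: (posnP (p (L i))) => [-> // | p_i].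
by case: (gen_L gp p_i) => [-> // | [j ij ->]]; apply: g_le_h.
Qed.

Lemma gen_le_R p i : gen p -> p (R i) <= h i (R i).
Proof. by move=> gp; case: (posnP (p (R i))) => [-> // | /(gen_R gp) ->]. Qed.

Lemma edge_partner_sq u i j q : H i j -> gen q ->
  h i (L i) + q (L i) <= u (L i) -> g i j (L j) + q (L j) <= u (L j) ->
  (forall v, v != L i -> q v <= u v) -> sq u.
Proof.
move=> ij gq le_i le_j le_off; exists (g i j), q; split=> // [|v _]; first exact: gen_g.
case: (eqVneq v (L i)) => [-> | ne_i]; first by have := g_le_h ij; lia.
case: (eqVneq v (L j)) => [-> // | ne_j].
by rewrite g_supp // add0n le_off.
Qed.

Lemma raise_L_lt u i : ~ sq u -> sq (u + U_(L i))%MM -> u (L i) < 2 * h i (L i).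
Proof.
move=> u_out /(raise_tight u_out) [p [q [gp gq _ tight _]]].
by have := gen_le_L i gp; have := gen_le_L i gq; lia.
Qed.

Lemma raise_R_partner u i : ~ sq u -> sq (u + U_(R i))%MM -> u (L i) < 2 * h i (L i) ->
  u (R i) < h i (R i) /\
  exists2 q, gen q & h i (L i) + q (L i) <= u (L i) /\ forall v, v != L i -> q v <= u v.
Proof.
move=> u_out /(raise_tight u_out) [p [q [gp gq p_R tight le_off]]] ltL.
move: tight le_off; rewrite (gen_R gp p_R) => tight le_off.
have le_L := le_off _ (negbT (@eq_lrshift m m i i)).
case: (posnP (q (R i))) => [q_R0 | q_R]; last by move: le_L; rewrite (gen_R gq q_R); lia.
split; first lia.
exists q => //; split=> // v ne_vL.
case: (eqVneq v (R i)) => [-> | ne_vR]; first by rewrite q_R0.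
by have := le_off v ne_vR; lia.
Qed.

Lemma gen_L_edge p i : gen p -> 0 < p (L i) -> p (R i) < h i (R i) ->
  exists2 j, H i j & p = g i j.
Proof. by move=> gp p_L p_R; case: (gen_L gp p_L) => // ph; move: p_R; rewrite ph ltnn. Qed.

Lemma raise_L_edges u i : ~ sq u -> sq (u + U_(L i))%MM ->
  u (R i) < h i (R i) -> h i (L i) <= u (L i) ->
  exists j k, [/\ H i j, H i k, g i j (L i) + g i k (L i) = (u (L i)).+1
                & forall v, v != L i -> g i j v + g i k v <= u v].
Proof.
move=> u_out /(raise_tight u_out) [p [q [gp gq p_L tight le_off]]] ltR leL.
have le_R := le_off _ (negbT (@eq_rlshift m m i i)).
have q_L : 0 < q (L i) by have := gen_le_L i gp; lia.
have [j ij pE] := gen_L_edge gp p_L (leq_ltn_trans (leq_addr _ _) (leq_ltn_trans le_R ltR)).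
have [k ik qE] := gen_L_edge gq q_L (leq_ltn_trans (leq_addl _ _) (leq_ltn_trans le_R ltR)).
by exists j, k; rewrite -pE -qE.
Qed.

Lemma sq_of_raises u i : sq (u + U_(L i))%MM -> sq (u + U_(R i))%MM -> sq u.
Proof.
move=> sqL sqR; apply: NNPP => u_out.
have [ltR [q gq [q_L q_off]]] := raise_R_partner u_out sqR (raise_L_lt u_out sqL).
have [j [k [ij ik tight jk_off]]] :=
  raise_L_edges u_out sqL ltR (leq_trans (leq_addr _ _) q_L).
have [ne_ji ne_ki] : j != i /\ k != i by rewrite !(eq_sym _ i) !H_neq.
have jk_j : g i j (L j) + g i k (L j) <= u (L j) by apply: jk_off; rewrite shiftE.
have jk_k : g i j (L k) + g i k (L k) <= u (L k) by apply: jk_off; rewrite shiftE.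
apply: u_out; case: (eqVneq j k) => [jk | ne_jk].
  rewrite -jk in tight jk_j; apply: (edge_partner_sq ij gq q_L _ q_off).
  by have := gen_le_L j gq; case: (cond ij) => [[_ hgE] | [dbl _]]; lia.
rewrite (g_L_eq0 ik ne_ji ne_jk) in jk_j.
rewrite (g_L_eq0 ij ne_ki) 1?eq_sym // in jk_k.
case: (posnP (q (L j))) => [qj0 | qj].
  by apply: (edge_partner_sq ij gq q_L _ q_off); lia.
case: (posnP (q (L k))) => [qk0 | qk].
  by apply: (edge_partner_sq ik gq q_L _ q_off); lia.
by case: (H_triangle_free ij ik (gen_two gq qj qk ne_jk)).
Qed.

Definition gen_bound := \max_(i < m) maxn (h i (L i)) (h i (R i)).

Lemma gen_le_bound p v : gen p -> p v <= gen_bound.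
Proof.
move=> gp; have le_max i : maxn (h i (L i)) (h i (R i)) <= gen_bound.
  exact: (@leq_bigmax _ (fun i : 'I_m => maxn (h i (L i)) (h i (R i))) i).
case: (lshift_or_rshift v) => [[i ->] | [i ->]]; apply: leq_trans (le_max i).
  exact: leq_trans (gen_le_L i gp) (leq_maxl _ _).
exact: leq_trans (gen_le_R i gp) (leq_maxr _ _).
Qed.

Local Notation N := (2 * gen_bound).

Lemma gen_pair_le_bound p q v : gen p -> gen q -> p v + q v <= N.
Proof. by move=> gp gq; rewrite mul2n -addnn leq_add ?gen_le_bound. Qed.

Lemma maximal_outside_cover u : (forall v, u v <= N) -> ~ sq u ->
  (forall v, u v < N -> sq (u + U_(v))%MM) ->
  exists A, independent H A /\ ~ pair_below gen (whisker_cover A) u.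
Proof.
move=> u_le u_out u_max; exists (fun i => u (L i) == N); split.
  move=> i j /eqP u_i /eqP u_j; apply/negP => ij; apply: u_out; have gij := gen_g ij.
  exists (g i j), (g i j); split=> // v _.
  case: (eqVneq v (L i)) => [-> | ne_i]; first by rewrite u_i; apply: gen_pair_le_bound.
  case: (eqVneq v (L j)) => [-> | ne_j]; first by rewrite u_j; apply: gen_pair_le_bound.
  by rewrite g_supp.
move=> [p [q [gp gq le_pq]]]; apply: (u_out); exists p, q; split=> // v _.
case: (eqVneq (u v) N) => [-> | ne_N]; first exact: gen_pair_le_bound.
have lt_N : u v < N by rewrite ltn_neqAle ne_N u_le.
apply: le_pq; case: (lshift_or_rshift v) => [[i vE] | [i vE]]; subst v.
  by rewrite whisker_cover_L.
rewrite whisker_cover_R; apply/eqP; apply: NNPP => ne_iN.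
have lt_iN : u (L i) < N by rewrite ltn_neqAle u_le andbT; apply/eqP.
exact: u_out (sq_of_raises (u_max _ lt_iN) (u_max _ lt_N)).
Qed.

Lemma sq_of_covers u :
  (forall A, independent H A -> pair_below gen (whisker_cover A) u) -> sq u.
Proof.
move=> covers; apply: NNPP => u_out.
pose u' := [multinom minn (u v) N | v < m + m].
have u'_le v : u' v <= N by rewrite mnmE geq_minr.
have u'_out : ~ sq u'.
  move=> sq_u'; apply/u_out/(pair_below_le _ sq_u').
  by apply/mnm_lepP => v; rewrite mnmE geq_minl.
have [w [/mnm_lepP le_u'w w_le w_out w_max]] := exists_maximal_outside u'_le u'_out.
have [A [indepA]] := maximal_outside_cover w_le w_out w_max; apply.
have [p [q [gp gq le_pq]]] := covers A indepA; exists p, q; split=> // v Av.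
by apply: leq_trans (le_u'w v); rewrite mnmE leq_min le_pq ?gen_pair_le_bound.
Qed.

End SquareCondition.
End GeneratorCombinatorics.


Section WhiskeredIdeal.
Variables (K : fieldType) (I : {mpoly K[m + m]} -> Prop).
Implicit Types (u p q mm : 'X_{1..m + m}).

Hypothesis I_support2 : is_support2 I.
Hypothesis I_edges : forall u v : 'I_(m + m), GI_edge I u v <-> whisker_edge H u v.
Hypothesis I_alpha : alpha_le1 I.

Lemma whisker_mingens : exists h g,
  (forall i, mingen I (h i) /\ Defs.msupp (h i) = [set L i; R i]) /\
  (forall i j, H i j -> mingen I (g i j) /\ Defs.msupp (g i j) = [set L i; L j]).
Proof.
have edge_mingen x y : whisker_edge H x y ->
    exists mm, mingen I mm /\ Defs.msupp mm = [set x; y].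
  by move=> /I_edges [_ [mm]]; exists mm.
have /fin_all_exists [h h_spec] : forall i, exists mm : 'X_{1..m + m},
    mingen I mm /\ Defs.msupp mm = [set L i; R i].
  by move=> i; apply: edge_mingen; right; exists i; left.
have /fin_all_exists [g g_spec] : forall ij : 'I_m * 'I_m, exists mm : 'X_{1..m + m},
    H ij.1 ij.2 -> mingen I mm /\ Defs.msupp mm = [set L ij.1; L ij.2].
  move=> [i j]; have [ij | _] := boolP (H i j); last by exists 0%MM.
  have [|mm mmP] := edge_mingen (L i) (L j); first by left; exists i, j.
  by exists mm.
by exists h, (fun i j => g (i, j)); split=> // i j; apply: (g_spec (i, j)).
Qed.

Section Generators.
Variables (h : 'I_m -> 'X_{1..m + m}) (g : 'I_m -> 'I_m -> 'X_{1..m + m}).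
Hypothesis h_spec : forall i, mingen I (h i) /\ Defs.msupp (h i) = [set L i; R i].
Hypothesis g_spec :
  forall i j, H i j -> mingen I (g i j) /\ Defs.msupp (g i j) = [set L i; L j].

Lemma gen_h i : mingen I (h i). Proof. exact: (h_spec i).1. Qed.
Lemma gen_g i j : H i j -> mingen I (g i j). Proof. by move=> /g_spec []. Qed.

Lemma h_supp i v : v != L i -> v != R i -> h i v = 0.
Proof. exact: mnm_pair_eq0 (h_spec i).2. Qed.
Lemma h_L_gt0 i : 0 < h i (L i). Proof. by case: (mnm_pair_gt0 (h_spec i).2). Qed.
Lemma h_R_gt0 i : 0 < h i (R i). Proof. by case: (mnm_pair_gt0 (h_spec i).2). Qed.

Lemma g_supp i j v : H i j -> v != L i -> v != L j -> g i j v = 0.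
Proof. by move=> ij; apply: mnm_pair_eq0 (g_spec ij).2. Qed.
Lemma g_L_gt0 i j : H i j -> 0 < g i j (L i).
Proof. by move=> ij; case: (mnm_pair_gt0 (g_spec ij).2). Qed.

Lemma g_sym i j : H i j -> g i j = g j i.
Proof.
move=> ij; have [gij_min gijE] := g_spec ij.
have [gji_min gjiE] : mingen I (g j i) /\ _ := g_spec (etrans (H_sym j i) ij).
by apply: (I_alpha gij_min gji_min gijE); rewrite gjiE setUC.
Qed.

Lemma mingenP p : mingen I p -> (exists i, p = h i) \/ (exists i j, H i j /\ p = g i j).
Proof.
move=> p_min; have [x [y [ne_xy pE]]] := I_support2.2 p p_min.
have /I_edges : GI_edge I x y by split=> //; exists p.
case=> [[i [j [xE yE ij]]] | [i [[xE yE] | [xE yE]]]]; subst x y.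
- by right; exists i, j; split=> //; have [gm gE] := g_spec ij; apply: I_alpha p_min gm pE gE.
- by left; exists i; have [hm hE] := h_spec i; apply: I_alpha p_min hm pE hE.
- by left; exists i; have [hm hE] := h_spec i; apply: I_alpha p_min hm pE _; rewrite hE setUC.
Qed.

Lemma H_triangle_free : GI_triangle_free I -> forall i j k, H i j -> H i k -> H j k -> False.
Proof.
move=> tf i j k ij ik jk; apply: (tf (L i) (L j) (L k)).
by split; apply/I_edges; left; [exists i, j | exists j, k | exists i, k].
Qed.

Lemma prime_edge_var P mm x y : is_prime_ideal P -> ideal_sub I P -> mingen I mm ->
  Defs.msupp mm = [set x; y] -> P 'X_x \/ P 'X_y.
Proof.
move=> Pprime IP mm_min mmE; have [v] := prime_mingen_var Pprime IP mm_min.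
by rewrite lt0n (mnm_pair_neq0 _ mmE) => /orP [] /eqP ->; [left | right].
Qed.

Lemma whisker_cover_mingen A : independent H A ->
  forall mm, mingen I mm -> exists2 v, whisker_cover A v & 0 < mm v.
Proof.
move=> indepA mm /mingenP [[i ->] | [i [j [ij ->]]]].
  case: (boolP (A i)) => Ai; first by exists (R i); rewrite ?whisker_cover_R ?h_R_gt0.
  by exists (L i); rewrite ?whisker_cover_L ?Ai ?h_L_gt0.
case: (boolP (A i)) => Ai; last by exists (L i); rewrite ?whisker_cover_L ?Ai ?g_L_gt0.
case: (boolP (A j)) => Aj; first by move: (indepA _ _ Ai Aj); rewrite ij.
by exists (L j); rewrite ?whisker_cover_L ?Aj // g_sym // g_L_gt0 // H_sym.
Qed.

Lemma whisker_cover_min_prime A : independent H A ->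
  is_min_prime I (var_ideal (K := K) (whisker_cover A)).
Proof.
move=> indepA; apply: var_ideal_min_prime I_support2.1 (whisker_cover_mingen indepA) _.
move=> Q Qprime IQ QA v.
have QC x : Q 'X_x -> whisker_cover A x by move=> /QA /var_ideal_X.
have [[i ->] | [i ->]] := lshift_or_rshift v; have [hm hE] := h_spec i;
  rewrite ?whisker_cover_L ?whisker_cover_R => Ai;
  case: (prime_edge_var Qprime IQ hm hE) => // /QC.
  by rewrite whisker_cover_R (negbTE Ai).
by rewrite whisker_cover_L Ai.
Qed.

Lemma min_prime_whisker P k : is_min_prime I P -> P 'X_(L k) -> ~ P 'X_(R k).
Proof.
move=> Pmin PL PR; have [Pprime IP _] := Pmin.
pose C v := asbool (P 'X_v) && (v != R k).
have inC v : P 'X_v -> v != R k -> C v by move=> Pv ne_v; rewrite /C ne_v andbT; apply/asboolP.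
suff : C (R k) by rewrite /C eqxx andbF.
apply: (min_prime_vars_sub I_support2.1 Pmin) PR => [v /andP [/asboolP //] |].
move=> mm /mingenP [[l ->] | [l [l' [ll' ->]]]].
  have [hm hE] := h_spec l; case: (prime_edge_var Pprime IP hm hE) => [Pl | Pr].
    by exists (L l); [apply: inC; rewrite ?shiftE | apply: h_L_gt0].
  case: (eqVneq l k) => [-> | ne_lk].
    by exists (L k); [apply: inC; rewrite ?shiftE | apply: h_L_gt0].
  by exists (R l); [apply: inC; rewrite ?shiftE | apply: h_R_gt0].
have [gm gE] := g_spec ll'; case: (prime_edge_var Pprime IP gm gE) => [Pl | Pl'].
  by exists (L l); [apply: inC; rewrite ?shiftE | apply: g_L_gt0].
by exists (L l'); [apply: inC; rewrite ?shiftE | rewrite g_sym // g_L_gt0 // H_sym].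
Qed.

Lemma symb_sq_eq_of_cond : GI_triangle_free I ->
  (forall i j, H i j -> symb_sq_cond (g i j (L i)) (g i j (L j)) (h i (L i)) (h j (L j))) ->
  ideal_eq (symb_sq I) (ideal_mul I I).
Proof.
move=> tf cond f; split; last first.
  by move=> If P [[_ P1 _] _ _]; exists 1%R; split=> //; rewrite mul1r.
move=> f_symb; apply/(ideal_sqE I_support2.1 f) => u f_u.
apply: (sq_of_covers gen_g g_sym mingenP h_supp g_supp (H_triangle_free tf) cond).
move=> A indepA.
exact: loc_contr_sq_var_ideal I_support2.1 (f_symb _ (whisker_cover_min_prime indepA)) u f_u.
Qed.

Lemma hE i v : h i v = if v == L i then h i (L i) else if v == R i then h i (R i) else 0.
Proof.
by case: eqP => [-> // | /eqP ne_L]; case: eqP => [-> // | /eqP ne_R]; apply: h_supp.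
Qed.

Lemma gE i j v : H i j ->
  g i j v = if v == L i then g i j (L i) else if v == L j then g i j (L j) else 0.
Proof.
move=> ij; case: eqP => [-> // | /eqP ne_i].
by case: eqP => [-> // | /eqP ne_j]; apply: g_supp.
Qed.

(* Splits on every index equation [k == l] left in the goal, discarding the branches
   that identify the two distinct endpoints of the edge. *)
Local Ltac case_index_eqs ne :=
  rewrite ?shiftE ?eqxx; repeat match goal with |- context [?x == ?y] =>
    case: (x =P y) => [?|?]; [subst; rewrite ?eqxx; try by rewrite eqxx in ne |] end.

Lemma symb_sq_eq_pair u i j : ideal_eq (symb_sq I) (ideal_mul I I) -> H i j ->
  (forall P, is_min_prime I P -> exists p q,
     [/\ mingen I p, mingen I q & forall v, P 'X_v -> p v + q v <= u v]) ->
  (forall k, 0 < u (R k) -> k = j) -> (forall k, 0 < u (L k) -> k = i \/ k = j) ->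
  exists p q, [/\ p = h j \/ p = g i j, q = h j \/ q = g i j & forall v, p v + q v <= u v].
Proof.
move=> sqE ij fits uR uL.
have /sqE /(ideal_sqE I_support2.1) /(_ u) := symb_sq_X I_support2.1.1 fits.
rewrite msuppX inE eqxx => /(_ isT) [p [q [pm qm /(_ _ isT) le_pq]]].
have below r : mingen I r -> (forall v, r v <= u v) -> r = h j \/ r = g i j.
  by move=> rm le_r; apply: (gen_below_edge g_sym mingenP h_R_gt0 g_L_gt0 ij).
exists p, q; split=> //; apply: below => // v; apply: leq_trans (le_pq v).
  exact: leq_addr.
exact: leq_addl.
Qed.

Lemma symb_sq_eq_lt_double i j : ideal_eq (symb_sq I) (ideal_mul I I) -> H i j ->
  h i (L i) < 2 * g i j (L i) -> h j (L j) <= g i j (L j).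
Proof.
move=> sqE ij lt_i; rewrite leqNgt; apply/negP => lt_j.
have ne_ij := H_neq ij.
(* Covered by h_i h_j at the minimal primes containing x_i and by g_ij^2 at the others,
   yet no product of two generators lies below it. *)
pose u := [multinom (if v == L i then h i (L i)
  else if v == L j then maxn (h j (L j)) (2 * g i j (L j))
  else if v == R j then h j (R j) else 0) | v < m + m].
have [|k|k|p [q [pE qE le_pq]]] := symb_sq_eq_pair (u := u) sqE ij.
- move=> P Pmin; case: (classic (P 'X_(L i))) => PLi.
    exists (h i), (h j); split; [exact: gen_h | exact: gen_h |] => v Pv.
    rewrite mnmE (hE i) (hE j); case: (lshift_or_rshift v) Pv => [[k ->] | [k ->]] Pv;
      case_index_eqs ne_ij; first [by case: (min_prime_whisker Pmin PLi Pv) | lia].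
  exists (g i j), (g i j); split; [exact: gen_g | exact: gen_g |] => v Pv.
  rewrite mnmE gE //; case: (lshift_or_rshift v) Pv => [[k ->] | [k ->]] Pv;
    case_index_eqs ne_ij; first [by case: PLi | lia].
- by rewrite mnmE; case_index_eqs ne_ij.
- by rewrite mnmE; case_index_eqs ne_ij; auto.
have gLj : 0 < g i j (L j) by rewrite g_sym // g_L_gt0 // H_sym.
have := h_R_gt0 j; have := g_L_gt0 ij.
have := h_L_eq0 h_supp ne_ij; have := g_R_eq0 g_supp j ij.
move: (le_pq (L i)) (le_pq (L j)) (le_pq (R j)); rewrite !mnmE; case_index_eqs ne_ij.
by case: pE qE => -> [] ->; lia.
Qed.

Lemma symb_sq_eq_le_eq i j : ideal_eq (symb_sq I) (ideal_mul I I) -> H i j ->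
  h i (L i) <= g i j (L i) -> h j (L j) <= g i j (L j) ->
  h i (L i) = g i j (L i) /\ h j (L j) = g i j (L j).
Proof.
move=> sqE ij le_i le_j; apply: NNPP => neq.
have ne_ij := H_neq ij.
(* Covered by h_i^2 or by h_j^2 at each minimal prime, yet only g_ij^2 could lie below it. *)
pose u := [multinom (if v == L i then 2 * h i (L i)
  else if v == L j then 2 * h j (L j) else 0) | v < m + m].
have [|k|k|p [q [pE qE le_pq]]] := symb_sq_eq_pair (u := u) sqE ij.
- move=> P Pmin; have [Pprime IP _] := Pmin; case: (classic (P 'X_(L i))) => PLi.
    exists (h i), (h i); split; [exact: gen_h | exact: gen_h |] => v Pv.
    rewrite mnmE hE; case: (lshift_or_rshift v) Pv => [[k ->] | [k ->]] Pv;
      case_index_eqs ne_ij; first [by case: (min_prime_whisker Pmin PLi Pv) | lia].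
  have PLj : P 'X_(L j).
    by have [gm gE] := g_spec ij; case: (prime_edge_var Pprime IP gm gE).
  exists (h j), (h j); split; [exact: gen_h | exact: gen_h |] => v Pv.
  rewrite mnmE hE; case: (lshift_or_rshift v) Pv => [[k ->] | [k ->]] Pv;
    case_index_eqs ne_ij; first [by case: (min_prime_whisker Pmin PLj Pv) | lia].
- by rewrite mnmE; case_index_eqs ne_ij.
- by rewrite mnmE; case_index_eqs ne_ij; auto.
have := h_R_gt0 j; have := g_R_eq0 g_supp j ij.
move: (le_pq (L i)) (le_pq (L j)) (le_pq (R j)); rewrite !mnmE; case_index_eqs ne_ij.
by case: pE qE => -> [] ->; lia.
Qed.

Lemma symb_sq_eq_cond i j : ideal_eq (symb_sq I) (ideal_mul I I) -> H i j ->
  symb_sq_cond (g i j (L i)) (g i j (L j)) (h i (L i)) (h j (L j)).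
Proof.
move=> sqE ij; have ji : H j i by rewrite H_sym.
have gLi := g_L_gt0 ij; have gLj := g_L_gt0 ji; rewrite -g_sym // in gLj.
have lt_ij := symb_sq_eq_lt_double sqE ij; have lt_ji := symb_sq_eq_lt_double sqE ji.
rewrite -g_sym // in lt_ji.
by have := symb_sq_eq_le_eq sqE ij; rewrite /symb_sq_cond; lia.
Qed.

Lemma symb_sq_eqP : GI_triangle_free I ->
  ideal_eq (symb_sq I) (ideal_mul I I) <->
  forall i j, H i j -> symb_sq_cond (g i j (L i)) (g i j (L j)) (h i (L i)) (h j (L j)).
Proof.
by move=> tf; split=> [sqE i j | cond]; [apply: symb_sq_eq_cond | apply: symb_sq_eq_of_cond].
Qed.

End Generators.
End WhiskeredIdeal.
End WhiskeredGraph.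

Theorem theorem3p8 (K : fieldType) (m : nat) (H : rel 'I_m)
  (I : {mpoly K[m + m]} -> Prop) :
  is_simple_graph H ->
  is_support2 I ->
  (forall u v : 'I_(m + m), GI_edge I u v <-> whisker_edge H u v) ->
  no_embedded_primes I ->
  GI_triangle_free I ->
  alpha_le1 I ->
  (ideal_eq (symb_sq I) (ideal_mul I I) <->
   (forall i j : 'I_m, H i j ->
      forall a b c c' d d' : nat,
        w_is I (lshift m i) (lshift m j) a b ->
        w_is I (lshift m i) (rshift m i) c c' ->
        w_is I (lshift m j) (rshift m j) d d' ->
        (c = a /\ d = b) \/ (2 * a <= c /\ 2 * b <= d)%N)).
Proof.
move=> simple support2 edges _ triangle_free alpha.
have [h [g [h_spec g_spec]]] := whisker_mingens edges.
rewrite (symb_sq_eqP simple support2 edges alpha h_spec g_spec triangle_free).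
split=> cond i j ij; have [gm gE] := g_spec i j ij.
  move=> a b c c' d d' w_ij w_i w_j.
  have [-> ->] := w_is_mingen alpha w_ij gm gE.
  have [-> _] := w_is_mingen alpha w_i (h_spec i).1 (h_spec i).2.
  have [-> _] := w_is_mingen alpha w_j (h_spec j).1 (h_spec j).2.
  exact: cond.
have [hi_m hiE] := h_spec i; have [hj_m hjE] := h_spec j.
exact: cond ij _ _ _ _ _ _ (mingen_w_is gm gE) (mingen_w_is hi_m hiE) (mingen_w_is hj_m hjE).
Qed.
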